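(* There is a function $C_5(t)$ such that for every positive integer $t$ the following holds: every connected bipartite graph $G$ with $\delta(G)\geq C_5(t)$ which is induced $S_{t,t}$-free has diameter at most $5$.
   Context: For positive integers $a,b$, the biclaw $S_{a,b}$ is the graph with vertex set $\{x,x_1,\dots,x_a,y,y_1,\dots,y_b\}$ and edges $xy$, $xy_1,\dots,xy_b$, $yx_1,\dots,yx_a$. Induced $S_{t,t}$-free means no induced subgraph isomorphic to $S_{t,t}$. $\delta(G)$ is the minimum degree. *)

From mathcomp Require Import all_boot.
Set Implicit Arguments. Unset Strict Implicit. Unset Printing Implicit Defensive.

Definition simple_graph (T : finType) (e : rel T) : Prop :=
  symmetric e /\ irreflexive e.

Definition degree (T : finType) (e : rel T) (v : T) : nat := #|[set w | e v w]|.

Definition min_degree_ge (T : finType) (e : rel T) (d : nat) : Prop :=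
  forall v : T, d <= degree e v.

Definition connected_graph (T : finType) (e : rel T) : Prop :=
  forall x y : T, connect e x y.

Definition bipartite (T : finType) (e : rel T) : Prop :=
  exists c : T -> bool, forall x y, e x y -> c x != c y.

Definition dist_le (T : finType) (e : rel T) (x y : T) (k : nat) : Prop :=
  exists s : seq T, [/\ path e x s, last x s = y & size s <= k].

Definition diameter_le (T : finType) (e : rel T) (k : nat) : Prop :=
  forall x y : T, dist_le e x y k.

(* An induced copy of the biclaw S_{a,b}: vertices x, y, x_1..x_a (f), y_1..y_b (g),
   pairwise distinct, whose induced edges are exactly xy, x y_j, y x_i. *)
Definition induced_biclaw (T : finType) (e : rel T) (a b : nat)
  (x y : T) (f : 'I_a -> T) (g : 'I_b -> T) : Prop :=
  (x != y) /\ injective f /\ injective g /\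
  (forall i, f i != x /\ f i != y) /\
  (forall j, g j != x /\ g j != y) /\
  (forall i j, f i != g j) /\
  e x y /\ (forall j, e x (g j)) /\ (forall i, e y (f i)) /\
  (forall i, ~~ e x (f i)) /\ (forall j, ~~ e y (g j)) /\
  (forall i i', ~~ e (f i) (f i')) /\ (forall j j', ~~ e (g j) (g j')) /\
  (forall i j, ~~ e (f i) (g j)).

Definition has_induced_biclaw (T : finType) (e : rel T) (a b : nat) : Prop :=
  exists x y (f : 'I_a -> T) (g : 'I_b -> T), induced_biclaw e x y f g.

Definition induced_free_biclaw (T : finType) (e : rel T) (a b : nat) : Prop :=
  ~ has_induced_biclaw e a b.

(* If x ~ y, A is a set of at least t neighbours of y and B a set of
   neighbours of x with no edge to A, then |B| < t, for otherwise A and B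
   would span an induced S_{t,t} on the edge xy.  Call w linked to u when w
   and u have at least t common neighbours.  Applied to an edge uy this
   principle shows that all but fewer than t neighbours of y are linked to u;
   applied to a walk u p1 p2 p3 it shows that p3 has fewer than t^2 neighbours
   outside the second neighbourhood N2(u) of u.  When the minimum degree is
   at least 2t^2, the middle vertex p3 of a walk of length 6 from u to v thus
   has a neighbour in N2(u) and N2(v), so every walk of length 6 can be
   shortened to length 4, and a connected graph has diameter at most 5.
   Bipartiteness is only used through triangle-freeness. *)
From mathcomp Require Import all_boot zify.
Set Implicit Arguments. Unset Strict Implicit. Unset Printing Implicit Defensive.

Definition nbhd (T : finType) (e : rel T) (v : T) : {set T} := [set w | e v w].

Definition nbhd2 (T : finType) (e : rel T) (u : T) : {set T} :=
  [set w | [exists m, e u m && e m w]].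

Definition triangle_free (T : finType) (e : rel T) : Prop :=
  forall x y z, e x y -> e y z -> ~~ e x z.

Lemma bipartite_triangle_free (T : finType) (e : rel T) :
  bipartite e -> triangle_free e.
Proof.
case=> c hc x y z exy eyz; apply/negP => exz.
by move: (hc _ _ exy) (hc _ _ eyz) (hc _ _ exz); case: (c x); case: (c y); case: (c z).
Qed.

Lemma exists_subset_card (T : finType) (A : {set T}) n :
  n <= #|A| -> exists2 B : {set T}, B \subset A & #|B| = n.
Proof.
case/card_geqP=> s [s_uniq s_size sA]; exists [set x in s].
  by apply/subsetP=> x; rewrite inE => /sA.
by rewrite cardsE (card_uniqP s_uniq).
Qed.

Lemma card_bigcup_le (I T : finType) (A : {set I}) (F : I -> {set T}) :
  #|\bigcup_(i in A) F i| <= \sum_(i in A) #|F i|.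
Proof.
elim/big_rec2: _ => [|i n U _ leUn]; first by rewrite cards0.
by rewrite (leq_trans (leq_card_setU _ _).1) ?leq_add2l.
Qed.

Lemma card_bigcup_le_mul (I T : finType) (A : {set I}) (F : I -> {set T}) k :
  {in A, forall i, #|F i| <= k} -> #|\bigcup_(i in A) F i| <= #|A| * k.
Proof.
move=> leFk; rewrite -sum_nat_const (leq_trans (card_bigcup_le _ _)) //.
exact: leq_sum.
Qed.

Lemma dist_le_cat (T : finType) (e : rel T) x y z m n :
  dist_le e x y m -> dist_le e y z n -> dist_le e x z (m + n).
Proof.
move=> [s1 [p1 l1 z1]] [s2 [p2 l2 z2]]; exists (s1 ++ s2); split.
- by rewrite cat_path p1 l1 p2.
- by rewrite last_cat l1 l2.
- by rewrite size_cat leq_add.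
Qed.

Lemma dist_le_nbhd2 (T : finType) (e : rel T) u w :
  w \in nbhd2 e u -> dist_le e u w 2.
Proof.
by rewrite inE => /existsP [m /andP [eum emw]]; exists [:: m; w]; rewrite /= eum emw.
Qed.

Lemma dist_le_nbhd2_sym (T : finType) (e : rel T) u w :
  symmetric e -> w \in nbhd2 e u -> dist_le e w u 2.
Proof.
move=> e_sym; rewrite inE => /existsP [m /andP [eum emw]].
by exists [:: m; u]; rewrite /= e_sym emw e_sym eum.
Qed.

Lemma diameter_le_of_shortcut (T : finType) (e : rel T) k :
  connected_graph e -> (forall x y, dist_le e x y k.+1 -> dist_le e x y k) ->
  diameter_le e k.
Proof.
move=> conn shortcut x y; have /connectP [p] := conn x y.
elim/last_ind: p y => [|p z IHp] y; first by move=> _ ->; exists [::].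
rewrite rcons_path last_rcons => /andP [xp ez] ->.
apply: shortcut; rewrite -addn1; apply: dist_le_cat (IHp _ xp erefl) _.
by exists [:: z]; rewrite /= ez.
Qed.

Section BiclawFree.

Variables (T : finType) (e : rel T) (t : nat).
Hypotheses (e_sym : symmetric e) (e_irr : irreflexive e).
Hypotheses (e_tfree : triangle_free e) (t_gt0 : 0 < t).
Hypothesis e_mindeg : min_degree_ge e (2 * t ^ 2).
Hypothesis e_free : induced_free_biclaw e t t.

Local Notation N := (nbhd e).
Local Notation N2 := (nbhd2 e).

Lemma biclaw_free_sets x y (A B : {set T}) :
  e x y -> A \subset N y -> B \subset N x -> {in A & B, forall a b, ~~ e a b} ->
  t <= #|A| -> #|B| < t.
Proof.
move=> exy sAy sBx AB tA; rewrite ltnNge; apply/negP => tB; apply: e_free.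
have nbrA a : a \in A -> e y a by move/(subsetP sAy); rewrite inE.
have nbrB b : b \in B -> e x b by move/(subsetP sBx); rewrite inE.
have [a0 a0A] : exists a, a \in A by apply/card_gt0P; apply: leq_trans tA.
have [b0 b0B] : exists b, b \in B by apply/card_gt0P; apply: leq_trans tB.
have xA : x \notin A by apply: contraL (nbrB _ b0B) => /AB; apply.
have yB : y \notin B.
  by apply: contraL (nbrA _ a0A) => /(AB _ _ a0A); rewrite e_sym.
pose f i := enum_val (widen_ord tA i); pose g j := enum_val (widen_ord tB j).
have fA i : f i \in A by apply: enum_valP.
have gB j : g j \in B by apply: enum_valP.
have eyx : e y x by rewrite e_sym.
exists x, y, f, g; split; first by apply: contraTneq exy => ->; rewrite e_irr.
split; first by move=> i j /enum_val_inj [/val_inj].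
split; first by move=> i j /enum_val_inj [/val_inj].
split.
  move=> i; split; first by apply: contraNneq xA => <-.
  by apply: contraTneq (nbrA _ (fA i)) => ->; rewrite e_irr.
split.
  move=> j; split; last by apply: contraNneq yB => <-.
  by apply: contraTneq (nbrB _ (gB j)) => ->; rewrite e_irr.
split.
  by move=> i j; apply: contraTneq (e_tfree exy (nbrA _ (fA i))) => ->; rewrite nbrB.
split=> //; split; first by move=> j; apply: nbrB.
split; first by move=> i; apply: nbrA.
split; first by move=> i; apply: e_tfree exy (nbrA _ (fA i)).
split; first by move=> j; apply: e_tfree eyx (nbrB _ (gB j)).
split; first by move=> i i'; apply: e_tfree (nbrA _ (fA i')); rewrite e_sym nbrA.
split; first by move=> j j'; apply: e_tfree (nbrB _ (gB j')); rewrite e_sym nbrB.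
by move=> i j; apply: AB.
Qed.

Lemma nbhd_card_ge v : 2 * t ^ 2 <= #|N v|.
Proof. exact: e_mindeg. Qed.

Definition linked (u : T) : {set T} := [set w | t <= #|N w :&: N u|].

Lemma few_unlinked_nbrs u y : e u y -> #|N y :\: linked u| < t.
Proof.
move=> euy; rewrite ltnNge; apply/negP => /exists_subset_card [D sD cardD].
have sDy : D \subset N y by apply: subset_trans sD (subsetDl _ _).
pose U := \bigcup_(a in D) (N a :&: N u).
have U_small : #|U| <= t * t.
  rewrite -{1}cardD; apply: card_bigcup_le_mul => a /(subsetP sD).
  by rewrite !inE -ltnNge => /andP [/ltnW].
have DU : {in D & N u :\: U, forall a b, ~~ e a b}.
  move=> a b aD; rewrite inE => /andP [bU bu]; apply: contra bU => eab.
  by apply/bigcupP; exists a; rewrite // inE inE eab.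
have := biclaw_free_sets euy sDy (subsetDl _ _) DU (eq_leq (esym cardD)).
have := subset_leq_card (subsetIr (N u) U); have := nbhd_card_ge u.
rewrite cardsD; nia.
Qed.

Lemma few_far_nbrs_of_linked u s z :
  s \in linked u -> e s z -> #|N z :\: N2 u| < t.
Proof.
move=> su esz; have ezs : e z s by rewrite e_sym.
apply: (biclaw_free_sets ezs (subsetIl (N s) (N u))) (subsetDl _ _) _ _.
  move=> a b; rewrite !inE => /andP [_ eua] /andP [bu _].
  by apply: contra bu => eab; apply/existsP; exists a; rewrite eua.
by move: su; rewrite inE.
Qed.

Lemma many_nbrs_near_linked u p1 p2 : e u p1 -> e p1 p2 ->
  t <= #|N p2 :&: \bigcup_(s in N p1 :&: linked u) N s|.
Proof.
move=> e1 e2; set M := \bigcup_(s in _) N s.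
have tA : t <= #|N p1 :&: linked u|.
  move: (few_unlinked_nbrs e1) (nbhd_card_ge p1).
  by rewrite -(cardsID (linked u) (N p1)); nia.
have e21 : e p2 p1 by rewrite e_sym.
have few_out : #|N p2 :\: M| < t.
  apply: (biclaw_free_sets e21 (subsetIl _ _)) (subsetDl _ _) _ tA.
  move=> a b aA; rewrite inE => /andP [bM _]; apply: contra bM => eab.
  by apply/bigcupP; exists a; rewrite // inE.
by move: few_out (nbhd_card_ge p2); rewrite -(cardsID M (N p2)); nia.
Qed.

Lemma few_far_nbrs_walk3 u p1 p2 p3 :
  e u p1 -> e p1 p2 -> e p2 p3 -> #|N p3 :\: N2 u| < t ^ 2.
Proof.
move=> e1 e2 e3.
have [D sD cardD] := exists_subset_card (many_nbrs_near_linked e1 e2).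
have sDp2 : D \subset N p2 by apply: subset_trans sD (subsetIl _ _).
pose U := \bigcup_(a in D) (N a :\: N2 u).
have U_small : #|U| <= #|D| * t.-1.
  apply: card_bigcup_le_mul => a /(subsetP sD) /setIP [_ /bigcupP [s]].
  rewrite in_setI => /andP [_ su]; rewrite inE => esa.
  by rewrite -ltnS prednK // (few_far_nbrs_of_linked su).
have DU : {in D & (N p3 :\: N2 u) :\: U, forall a b, ~~ e a b}.
  move=> a b aD; rewrite inE => /andP [bU bfar]; apply: contra bU => eab.
  apply/bigcupP; exists a; rewrite // !inE eab.
  by move: bfar; rewrite !inE => /andP [->].
have e32 : e p3 p2 by rewrite e_sym.
have := biclaw_free_sets e32 sDp2 (subset_trans (subsetDl _ _) (subsetDl _ _)) DU.
rewrite cardD leqnn cardsD => /(_ isT).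
have := subset_leq_card (subsetIr (N p3 :\: N2 u) U); nia.
Qed.

Lemma walk6_dist_le4 u p1 p2 p3 q2 q1 v :
  e u p1 -> e p1 p2 -> e p2 p3 -> e p3 q2 -> e q2 q1 -> e q1 v ->
  dist_le e u v 4.
Proof.
move=> e1 e2 e3 e4 e5 e6.
have far_u := few_far_nbrs_walk3 e1 e2 e3.
have far_v : #|N p3 :\: N2 v| < t ^ 2.
  by apply: (@few_far_nbrs_walk3 _ q1 q2); rewrite e_sym.
have [w] : exists w, w \in N p3 :&: N2 u :&: N2 v.
  apply/card_gt0P; move: far_u far_v (nbhd_card_ge p3).
  rewrite -(cardsID (N2 u) (N p3)) -(cardsID (N2 v) (N p3 :&: N2 u)).
  have := subset_leq_card (setSD (N2 v) (subsetIl (N p3) (N2 u))); nia.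
rewrite !in_setI => /andP [/andP [_ wu] wv].
exact: (dist_le_cat (dist_le_nbhd2 wu) (dist_le_nbhd2_sym e_sym wv)).
Qed.

Lemma dist6_shortcut x y : dist_le e x y 6 -> dist_le e x y 5.
Proof.
move=> [s [xs sy size_s]]; case: (leqP (size s) 5) => [|size_gt5].
  by exists s.
have [s4 [xs4 s4y size_s4]] : dist_le e x y 4.
  case: s xs sy size_s size_gt5 =>
    [|p1 [|p2 [|p3 [|q2 [|q1 [|v [|? ?]]]]]]] //=.
  move=> /and5P [e1 e2 e3 e4 /andP [e5 /andP [e6 _]]] <- _ _.
  exact: walk6_dist_le4 e1 e2 e3 e4 e5 e6.
by exists s4; split => //; apply: leq_trans size_s4 _.
Qed.

End BiclawFree.

Theorem mainTheorem8 :
  exists C5 : nat -> nat,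
    forall t : nat, 0 < t ->
    forall (T : finType) (e : rel T),
      simple_graph e -> connected_graph e -> bipartite e ->
      min_degree_ge e (C5 t) ->
      induced_free_biclaw e t t ->
      diameter_le e 5.
Proof.
exists (fun t => 2 * t ^ 2) => t t_gt0 T e [e_sym e_irr] conn bip mindeg free.
apply: diameter_le_of_shortcut conn _ => x y.
exact: dist6_shortcut e_sym e_irr (bipartite_triangle_free bip) t_gt0 mindeg free x y.
Qed.
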